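(* Every Cartan–Eilenberg system (respectively, every left Cartan–Eilenberg system) $(H,\partial)$ can be prolonged to a right (respectively extended) Cartan–Eilenberg system whose right couple $(A'',E^1)$ converges conditionally to its limit, namely by setting $H(i,\infty)=\operatorname{colim}_jH(i,j)$ for each $i$, with $\eta$ and $\partial$ involving $\infty$ obtained by passing to colimits over $k$ in the exact triangles for $(i,j,k)$. This prolongation is essentially unique: for any prolongation of $(H,\partial)$ to a right (respectively extended) Cartan–Eilenberg system whose right couple converges conditionally to its limit, the canonical maps $\operatorname{colim}_jH(i,j)\to H(i,\infty)$ are isomorphisms.
   Context: Let $\mathcal{A}$ be the category of $\mathbb{Z}$-graded $R$-modules. For a linearly ordered set $\mathcal{I}$, an $\mathcal{I}$-system $(H,\partial)$ consists of objects $H(i,j)$ for $i\le j$ in $\mathcal{I}$, functorial morphisms $\eta\colon H(i,j)\to H(i',j')$ (internal degree $0$) for $i\le i'$, $j\le j'$, and natural morphisms $\partial\colon H(j,k)\to H(i,j)$ (internal degree $-1$) for $i\le j\le k$, with $H(i,j)\xrightarrow{\eta}H(i,k)\xrightarrow{\eta}H(j,k)\xrightarrow{\partial}H(i,j)$ exact at each vertex. Cartan–Eilenberg system: $\mathbb{Z}$-system; right: $(\mathbb{Z}\cup\{+\infty\})$-system; left: $(\mathbb{Z}\cup\{-\infty\})$-system; extended: $(\mathbb{Z}\cup\{\pm\infty\})$-system. A prolongation is a system on the larger index set whose restriction is the given one. Right couple: $A''_s=H(s,\infty)$, $E^1_s=H(s-1,s)$, $\alpha_s=\eta$, $\beta_s=\partial\colon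 H(s,\infty)\to H(s-1,s)$, $\gamma_s=\eta\colon H(s-1,s)\to H(s-1,\infty)$; it converges conditionally to the limit if $\operatorname{colim}_sA''_s=0$. *)

From HB Require Import structures.
From mathcomp Require Import all_boot all_order all_algebra.
Set Implicit Arguments.
Unset Strict Implicit.
Unset Printing Implicit Defensive.
Import Order.TTheory GRing.Theory Num.Theory.
Local Open Scope ring_scope.

(* The index set Z ∪ {-oo, +oo}; Z, Z∪{+oo}, Z∪{-oo} are the sub-orders
   cut out by the predicates isFin, notNInf, notPInf. *)
Inductive ext : Type := NInf | Fin of int | PInf.

Definition ele (a b : ext) : bool :=
  match a, b with
  | NInf, _ => true
  | _, PInf => true
  | Fin i, Fin j => (i <= j)%R
  | _, _ => false
  end.

Definition isFin (a : ext) : bool := if a is Fin _ then true else false.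
Definition notNInf (a : ext) : bool := if a is NInf then false else true.
Definition notPInf (a : ext) : bool := if a is PInf then false else true.
Definition allExt (a : ext) : bool := true.

Definition islin (R : pzRingType) (U V : lmodType R) (f : U -> V) : Prop :=
  forall (a : R) (x y : U), f (a *: x + y) = a *: f x + f y.

(* A Z-graded R-module is
   a family  int -> lmodType R  (degree n component).  eta a b c d is the
   degree-0 map H(a,b) -> H(c,d); del a b c is the degree -1 map
   H(b,c) -> H(a,b), written degreewise as H(b,c)_(n+1) -> H(a,b)_n.
   Values at irrelevant indices are junk and constrained by nothing. *)
Record sysdata (R : pzRingType) : Type := SysData {
  H : ext -> ext -> int -> lmodType R;
  eta : forall (a b c d : ext) (n : int), H a b n -> H c d n;
  del : forall (a b c : ext) (n : int), H b c (n + 1) -> H a b n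
}.
Arguments H {R} s _ _ _.
Arguments eta {R} s _ _ _ _ _ _.
Arguments del {R} s _ _ _ _ _.

Definition is_system (R : pzRingType) (P : ext -> bool) (D : sysdata R) : Prop :=
  (forall a b c d n, P a -> P b -> P c -> P d -> ele a b -> ele c d ->
      ele a c -> ele b d -> islin (eta D a b c d n)) /\
  (forall a b c n, P a -> P b -> P c -> ele a b -> ele b c ->
      islin (del D a b c n)) /\
  (forall a b n x, P a -> P b -> ele a b -> eta D a b a b n x = x) /\
  (forall a b c d e f n x, P a -> P b -> P c -> P d -> P e -> P f ->
      ele a b -> ele c d -> ele e f -> ele a c -> ele b d -> ele c e -> ele d f ->
      eta D c d e f n (eta D a b c d n x) = eta D a b e f n x) /\
  (forall a b c a' b' c' n x, P a -> P b -> P c -> P a' -> P b' -> P c' ->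
      ele a b -> ele b c -> ele a' b' -> ele b' c' ->
      ele a a' -> ele b b' -> ele c c' ->
      eta D a b a' b' n (del D a b c n x) = del D a' b' c' n (eta D b c b' c' (n + 1) x)) /\
  (forall a b c, P a -> P b -> P c -> ele a b -> ele b c ->
     (forall n (y : H D a c n),
        eta D a c b c n y = 0 <-> exists x : H D a b n, eta D a b a c n x = y) /\
     (forall n (y : H D b c (n + 1)),
        del D a b c n y = 0 <-> exists x : H D a c (n + 1), eta D a c b c (n + 1) x = y) /\
     (forall n (y : H D a b n),
        eta D a b a c n y = 0 <-> exists x : H D b c (n + 1), del D a b c n x = y)).

Definition CE_system R := @is_system R isFin.
Definition right_CE_system R := @is_system R notNInf.
Definition left_CE_system R := @is_system R notPInf.
Definition extended_CE_system R := @is_system R allExt.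

Definition IsColim (R : pzRingType) (Dm : int -> bool)
    (X : int -> int -> lmodType R)
    (f : forall (j j' n : int), X j n -> X j' n)
    (C : int -> lmodType R) (c : forall (j n : int), X j n -> C n) : Prop :=
  (forall j n, Dm j -> islin (c j n)) /\
  (forall j j' n x, Dm j -> Dm j' -> (j <= j')%R -> c j' n (f j j' n x) = c j n x) /\
  forall (T : int -> lmodType R) (g : forall (j n : int), X j n -> T n),
    (forall j n, Dm j -> islin (g j n)) ->
    (forall j j' n x, Dm j -> Dm j' -> (j <= j')%R -> g j' n (f j j' n x) = g j n x) ->
    exists u : forall n, C n -> T n,
      (forall n, islin (u n)) /\
      (forall j n x, Dm j -> u n (c j n x) = g j n x) /\
      (forall u' : forall n, C n -> T n,
         (forall n, islin (u' n)) ->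
         (forall j n x, Dm j -> u' n (c j n x) = g j n x) ->
         forall n y, u' n y = u n y).

Arguments IsColim {R} Dm X f C c.

Definition is_prolongation (R : pzRingType) (P : ext -> bool) (D D' : sysdata R)
    (phi : forall a b n, H D a b n -> H D' a b n) : Prop :=
  (forall a b n, P a -> P b -> ele a b -> islin (phi a b n) /\ bijective (phi a b n)) /\
  (forall a b c d n x, P a -> P b -> P c -> P d -> ele a b -> ele c d ->
     ele a c -> ele b d ->
     phi c d n (eta D a b c d n x) = eta D' a b c d n (phi a b n x)) /\
  (forall a b c n x, P a -> P b -> P c -> ele a b -> ele b c ->
     phi a b n (del D a b c n x) = del D' a b c n (phi b c (n + 1) x)).

Arguments is_prolongation {R} P D D' phi.

(* The right couple A''_s = H(s,+oo), alpha_s = eta, converges conditionally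
   to the limit: colim_s A''_s = 0 (every colimit of the sequence is zero). *)
Definition cond_conv (R : pzRingType) (D : sysdata R) : Prop :=
  forall (C : int -> lmodType R) (c : forall (s n : int), H D (Fin s) PInf n -> C n),
    IsColim (fun _ => true) (fun s => H D (Fin s) PInf)
            (fun s t => eta D (Fin s) PInf (Fin t) PInf) C c ->
    forall n (y : C n), y = 0.

Definition row_dom (i : ext) : int -> bool := fun j => ele i (Fin j).

Definition row_cocone (R : pzRingType) (D D' : sysdata R)
    (phi : forall a b n, H D a b n -> H D' a b n) (i : ext) :
    forall (j n : int), H D i (Fin j) n -> H D' i PInf n :=
  fun j n x => eta D' i (Fin j) i PInf n (phi i (Fin j) n x).

Arguments row_cocone {R} D D' phi i j n x.

Definition prolongation_statement (R : pzRingType) (P Q : ext -> bool)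
    (D : sysdata R) : Prop :=
  (exists (D' : sysdata R) (phi : forall a b n, H D a b n -> H D' a b n),
      is_system Q D' /\ is_prolongation P D D' phi /\ cond_conv D' /\
      forall i, P i ->
        IsColim (row_dom i) (fun j => H D i (Fin j))
                (fun j j' => eta D i (Fin j) i (Fin j'))
                (H D' i PInf) (row_cocone D D' phi i)) /\
  (forall (D' : sysdata R) (phi : forall a b n, H D a b n -> H D' a b n),
      is_system Q D' -> is_prolongation P D D' phi -> cond_conv D' ->
      forall i, P i ->
      forall (C : int -> lmodType R) (c : forall (j n : int), H D i (Fin j) n -> C n),
        IsColim (row_dom i) (fun j => H D i (Fin j))
                (fun j j' => eta D i (Fin j) i (Fin j')) C c ->
      forall u : forall n, C n -> H D' i PInf n,
        (forall n, islin (u n)) ->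
        (forall j n x, row_dom i j -> u n (c j n x) = row_cocone D D' phi i j n x) ->
        forall n, bijective (u n)).

From Pilot Require Import Defs.
From HB Require Import structures.
From mathcomp Require Import all_boot all_order all_algebra.
From mathcomp Require Import boolp zify.
Import Defs.

Set Implicit Arguments.
Unset Strict Implicit.
Unset Printing Implicit Defensive.
Import Order.TTheory GRing.Theory Num.Theory.
Local Open Scope ring_scope.

(* H(i,+oo) is the directed colimit of j |-> H(i,j), built explicitly as classes of
   eventual equality; the maps into and out of +oo are induced on colimits, and the new
   triangles are exact because directed colimits preserve exactness.  The right couple
   converges conditionally since an element of H(s,+oo) comes from some H(s,j) and dies
   in H(j,+oo), where it factors through H(j,j) = 0.
   Conversely, in any conditionally convergent prolongation every element of H(s,+oo)
   dies in some H(t,+oo); the exact triangles for (i,t,+oo) then show that the cocone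
   H(i,j) -> H(i,+oo) is onto with eventually vanishing kernel, hence a colimit, which
   gives the uniqueness. *)

Section LinearMaps.
Variables (R : pzRingType) (U V W : lmodType R).

Lemma islin0 (g : U -> V) : islin g -> g 0 = 0.
Proof.
move=> lin_g; have := lin_g 1 0 0; rewrite scaler0 addr0 scale1r => g00.
by apply: (addrI (g 0)); rewrite addr0 -g00.
Qed.

Lemma islinD (g : U -> V) : islin g -> forall x y, g (x + y) = g x + g y.
Proof. by move=> lin_g x y; have := lin_g 1 x y; rewrite !scale1r. Qed.

Lemma islinZ (g : U -> V) : islin g -> forall a x, g (a *: x) = a *: g x.
Proof. by move=> lin_g a x; have := lin_g a x 0; rewrite !addr0 (islin0 lin_g) addr0. Qed.

Lemma islinB (g : U -> V) : islin g -> forall x y, g (x - y) = g x - g y.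
Proof. by move=> lin_g x y; rewrite (islinD lin_g) -scaleN1r (islinZ lin_g) scaleN1r. Qed.

Lemma islin_comp (g : U -> V) (h : V -> W) : islin g -> islin h -> islin (h \o g).
Proof. by move=> lin_g lin_h a x y /=; rewrite lin_g lin_h. Qed.

Lemma islin_id : islin (@id U). Proof. by []. Qed.

Lemma islin_cst0 : islin (fun _ : U => 0 : V).
Proof. by move=> a x y; rewrite scaler0 addr0. Qed.
End LinearMaps.

Section DirectedColimit.
Variables (R : pzRingType) (Dm : int -> bool) (X : int -> lmodType R)
  (f : forall j j' : int, X j -> X j').
Arguments f : clear implicits.

Record directed_system : Prop := DirectedSystem {
  dir_up : forall j j' : int, Dm j -> j <= j' -> Dm j';
  dir_nonempty : exists j, Dm j;
  dir_lin : forall j j' : int, Dm j -> j <= j' -> islin (f j j');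
  dir_comp : forall (j k l : int) x, Dm j -> j <= k -> k <= l -> f k l (f j k x) = f j l x }.

Hypothesis dirX : directed_system.
Let Dm_up := dir_up dirX.
Let f_lin := dir_lin dirX.
Let f_comp := dir_comp dirX.

Definition elt := {j : int & X j}.
Definition mk_elt (j : int) (x : X j) : elt := existT X j x.

Definition eventually_eq (p q : elt) : Prop :=
  exists m, forall k, m <= k -> tag p <= k -> tag q <= k ->
    f (tag p) k (tagged p) = f (tag q) k (tagged q).

Lemma eventually_eq_refl p : eventually_eq p p.
Proof. by exists 0. Qed.

Lemma eventually_eq_sym p q : eventually_eq p q -> eventually_eq q p.
Proof. by case=> m eq_pq; exists m => k *; rewrite eq_pq. Qed.

Lemma eventually_eq_trans p q r : eventually_eq p q -> eventually_eq q r -> eventually_eq p r.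
Proof.
case=> [m1 eq_pq] [m2 eq_qr]; exists (Num.max (Num.max m1 m2) (tag q)) => k mk pk rk.
rewrite eq_pq ?eq_qr //; lia.
Qed.

Definition colim_carrier :=
  {S : elt -> Prop | exists2 p, Dm (tag p) & S = eventually_eq p}.

Definition dir_base : int := xchoose (dir_nonempty dirX).
Lemma dir_baseP : Dm dir_base. Proof. exact: xchooseP. Qed.

(* Elements lying outside the diagram are sent to the class of zero. *)
Definition normalize (p : elt) : elt :=
  if Dm (tag p) then p else mk_elt (0 : X dir_base).

Lemma normalizeP p : Dm (tag (normalize p)).
Proof. by rewrite /normalize; case: ifP => // _; exact: dir_baseP. Qed.

Lemma normalize_id p : Dm (tag p) -> normalize p = p.
Proof. by rewrite /normalize => ->. Qed.

Definition cls (p : elt) : colim_carrier :=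
  exist _ (eventually_eq (normalize p)) (ex_intro2 _ _ (normalize p) (normalizeP p) erefl).

Lemma cls_eq p q : Dm (tag p) -> Dm (tag q) -> (cls p = cls q <-> eventually_eq p q).
Proof.
move=> dp dq; split.
  by move=> /(congr1 sval) /=; rewrite !normalize_id // => ->; exact: eventually_eq_refl.
move=> eq_pq; apply: eq_exist; rewrite !normalize_id //.
apply: funext => r; apply: propext.
by split; apply: eventually_eq_trans; [exact: eventually_eq_sym|].
Qed.

Lemma cls_surj (y : colim_carrier) : exists2 p, Dm (tag p) & y = cls p.
Proof. by case: y => S [p dp eS]; exists p => //; apply: eq_exist; rewrite normalize_id. Qed.

Definition rep (y : colim_carrier) : elt := sval (cid2 (cls_surj y)).

Lemma repP y : Dm (tag (rep y)) /\ y = cls (rep y).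
Proof. by rewrite /rep; case: cid2. Qed.

Lemma rep_cls j (x : X j) : Dm j -> eventually_eq (rep (cls (mk_elt x))) (mk_elt x).
Proof. by move=> dj; case: (repP (cls (mk_elt x))) => dp e; apply/cls_eq; rewrite -?e. Qed.

Lemma cls_push j k (x : X j) : Dm j -> j <= k -> cls (mk_elt x) = cls (mk_elt (f j k x)).
Proof.
move=> dj jk; apply/cls_eq => //=; first exact: Dm_up dj jk.
by exists k => l kl _ _ /=; rewrite f_comp.
Qed.

Lemma cls_at y (b : int) : exists k (x : X k), [/\ Dm k, b <= k & y = cls (mk_elt x)].
Proof.
case: (cls_surj y) => -[j x] /= dj ->.
have jk : j <= Num.max j b by lia.
by exists (Num.max j b), (f j _ x); split; [exact: Dm_up dj jk | lia | exact: cls_push].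
Qed.

Lemma cls_at2 y z : exists k (x1 x2 : X k),
  [/\ Dm k, y = cls (mk_elt x1) & z = cls (mk_elt x2)].
Proof.
case: (cls_at y 0) => j [x [dj _ ->]]; case: (cls_at z j) => k [x2 [dk jk ->]].
by exists k, (f j k x), x2; split => //; apply: cls_push.
Qed.

Lemma cls_at3 y z w : exists k (x1 x2 x3 : X k),
  [/\ Dm k, y = cls (mk_elt x1), z = cls (mk_elt x2) & w = cls (mk_elt x3)].
Proof.
case: (cls_at2 y z) => j [x1 [x2 [dj -> ->]]]; case: (cls_at w j) => k [x3 [dk jk ->]].
by exists k, (f j k x1), (f j k x2), x3; split => //; apply: cls_push.
Qed.

(* Degreewise operations commuting with the transition maps descend to the colimit. *)
Definition natural1 (g : forall k, X k -> X k) :=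
  forall k l x, Dm k -> k <= l -> f k l (g k x) = g l (f k l x).
Definition natural2 (g : forall k, X k -> X k -> X k) :=
  forall k l x y, Dm k -> k <= l -> f k l (g k x y) = g l (f k l x) (f k l y).

Definition lift1 (g : forall k, X k -> X k) (y : colim_carrier) : colim_carrier :=
  let p := rep y in cls (mk_elt (g (tag p) (tagged p))).
Definition lift2 (g : forall k, X k -> X k -> X k) (y z : colim_carrier) : colim_carrier :=
  let p := rep y in let q := rep z in let k := Num.max (tag p) (tag q) in
  cls (mk_elt (g k (f (tag p) k (tagged p)) (f (tag q) k (tagged q)))).

Lemma lift1E g k (x : X k) : natural1 g -> Dm k ->
  lift1 g (cls (mk_elt x)) = cls (mk_elt (g k x)).
Proof.
move=> nat_g dk; rewrite /lift1; have := rep_cls x dk.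
case: (repP (cls (mk_elt x))); case: (rep _) => j u /= dj _ [m eq_u].
apply/cls_eq => //; exists m => l ml jl kl /=.
by rewrite !nat_g // eq_u.
Qed.

Lemma lift2E g k (x y : X k) : natural2 g -> Dm k ->
  lift2 g (cls (mk_elt x)) (cls (mk_elt y)) = cls (mk_elt (g k x y)).
Proof.
move=> nat_g dk; rewrite /lift2; have := rep_cls x dk; have := rep_cls y dk.
case: (repP (cls (mk_elt y))); case: (rep (cls (mk_elt y))) => j2 u2 /= dj2 _ [m2 eq_u2].
case: (repP (cls (mk_elt x))); case: (rep (cls (mk_elt x))) => j1 u1 /= dj1 _ [m1 eq_u1].
have j1j : j1 <= Num.max j1 j2 by lia.
have dj : Dm (Num.max j1 j2) by exact: Dm_up dj1 j1j.
apply/cls_eq => //; exists (Num.max (Num.max m1 m2) (Num.max j1 j2)) => l ml jl kl /=.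
rewrite nat_g // !f_comp //; try lia.
by rewrite nat_g // eq_u1 ?eq_u2 //=; lia.
Qed.

Definition colim_zero : colim_carrier := cls (mk_elt (0 : X dir_base)).
Definition colim_add := lift2 (fun k x y => x + y).
Definition colim_opp := lift1 (fun k x => - x).
Definition colim_scale (a : R) := lift1 (fun k x => a *: x).

Lemma colim_zeroE k : Dm k -> colim_zero = cls (mk_elt (0 : X k)).
Proof.
move=> dk; apply/cls_eq => //; first exact: dir_baseP.
by exists 0 => l _ bl kl /=; rewrite (islin0 (f_lin dir_baseP bl)) (islin0 (f_lin dk kl)).
Qed.

Lemma colim_addE k (x y : X k) : Dm k ->
  colim_add (cls (mk_elt x)) (cls (mk_elt y)) = cls (mk_elt (x + y)).
Proof. by apply: lift2E => l l' x' y' dl ll'; rewrite (islinD (f_lin dl ll')). Qed.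

Lemma colim_oppE k (x : X k) : Dm k -> colim_opp (cls (mk_elt x)) = cls (mk_elt (- x)).
Proof.
by apply: lift1E => l l' x' dl ll'; rewrite -!scaleN1r (islinZ (f_lin dl ll')).
Qed.

Lemma colim_scaleE a k (x : X k) : Dm k ->
  colim_scale a (cls (mk_elt x)) = cls (mk_elt (a *: x)).
Proof. by apply: lift1E => l l' x' dl ll'; rewrite (islinZ (f_lin dl ll')). Qed.

Lemma colim_addA : associative colim_add.
Proof.
move=> y z w; case: (cls_at3 y z w) => k [x1 [x2 [x3 [dk -> -> ->]]]].
by rewrite !colim_addE // addrA.
Qed.

Lemma colim_addC : commutative colim_add.
Proof.
by move=> y z; case: (cls_at2 y z) => k [x1 [x2 [dk -> ->]]]; rewrite !colim_addE // addrC.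
Qed.

Lemma colim_add0 : left_id colim_zero colim_add.
Proof.
move=> y; case: (cls_at y 0) => k [x [dk _ ->]].
by rewrite (colim_zeroE dk) colim_addE // add0r.
Qed.

Lemma colim_addN : left_inverse colim_zero colim_opp colim_add.
Proof.
move=> y; case: (cls_at y 0) => k [x [dk _ ->]].
by rewrite colim_oppE // colim_addE // addNr (colim_zeroE dk).
Qed.

HB.instance Definition _ := gen_eqMixin colim_carrier.
HB.instance Definition _ := gen_choiceMixin colim_carrier.
HB.instance Definition _ :=
  GRing.isZmodule.Build colim_carrier colim_addA colim_addC colim_add0 colim_addN.

Lemma colim_scaleA a b v : colim_scale a (colim_scale b v) = colim_scale (a * b) v.
Proof. by case: (cls_at v 0) => k [x [dk _ ->]]; rewrite !colim_scaleE // scalerA. Qed.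

Lemma colim_scale1 : left_id 1 colim_scale.
Proof. by move=> v; case: (cls_at v 0) => k [x [dk _ ->]]; rewrite colim_scaleE // scale1r. Qed.

Lemma colim_scaleDr : right_distributive colim_scale +%R.
Proof.
move=> a y z; case: (cls_at2 y z) => k [x1 [x2 [dk -> ->]]].
by rewrite /GRing.add /= !colim_addE // !colim_scaleE // colim_addE // scalerDr.
Qed.

Lemma colim_scaleDl v : {morph colim_scale^~ v : a b / a + b}.
Proof.
move=> a b; case: (cls_at v 0) => k [x [dk _ ->]].
by rewrite /GRing.add /= !colim_scaleE // colim_addE // scalerDl.
Qed.

HB.instance Definition _ := GRing.Zmodule_isLmodule.Build R colim_carrier
  colim_scaleA colim_scale1 colim_scaleDr colim_scaleDl.

Definition colim : lmodType R := colim_carrier.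

Definition colim_in (j : int) (x : X j) : colim := cls (mk_elt x).
Arguments colim_in : clear implicits.

Lemma colim_in_lin j : Dm j -> islin (colim_in j).
Proof.
move=> dj a x y; rewrite /colim_in -(colim_addE _ _ dj) -(colim_scaleE _ _ dj) //.
Qed.

Lemma colim_in_compat j j' x : Dm j -> j <= j' -> colim_in j' (f j j' x) = colim_in j x.
Proof. by move=> dj jj; rewrite /colim_in -cls_push. Qed.

Lemma colim_in_surj (y : colim) : exists j x, Dm j /\ y = colim_in j x.
Proof. by case: (cls_at y 0) => k [x [dk _ ->]]; exists k, x. Qed.

Lemma colim_in_ker j x : Dm j -> colim_in j x = 0 ->
  exists m, forall k, m <= k -> j <= k -> f j k x = 0.
Proof.
move=> dj; rewrite [0](colim_zeroE dj) /colim_in => /(@cls_eq (mk_elt x) (mk_elt 0) dj dj) [m eq_x].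
by exists m => k mk jk; rewrite (eq_x k) //= (islin0 (f_lin dj jk)).
Qed.

Section Lift.
Variables (T : lmodType R) (g : forall j, X j -> T).
Arguments g : clear implicits.
Hypothesis g_compat : forall j j' x, Dm j -> j <= j' -> g j' (f j j' x) = g j x.

Definition colim_lift (y : colim) : T := g (tag (rep y)) (tagged (rep y)).

Lemma colim_lift_in j x : Dm j -> colim_lift (colim_in j x) = g j x.
Proof.
move=> dj; rewrite /colim_lift /colim_in; have := rep_cls x dj.
case: (repP (cls (mk_elt x))); case: (rep _) => j1 u1 /= dj1 _ [m eq_u].
pose k := Num.max (Num.max m j1) j.
have j1k : j1 <= k by lia.
have jk : j <= k by lia.
by rewrite -(g_compat u1 dj1 j1k) (eq_u k) //= ?g_compat //; lia.
Qed.

Lemma colim_lift_lin : (forall j, Dm j -> islin (g j)) -> islin colim_lift.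
Proof.
move=> lin_g a y z; case: (cls_at2 y z) => k [x1 [x2 [dk -> ->]]].
rewrite -/(colim_in k x1) -/(colim_in k x2) -(colim_in_lin dk) !colim_lift_in //.
exact: lin_g.
Qed.
End Lift.
End DirectedColimit.

Arguments directed_system {R} Dm X f.
Arguments colim_in {R Dm X f} dirX j x.
Arguments colim_lift {R Dm X f} dirX {T} g y.
Arguments colim_in_lin {R Dm X f} dirX [j].
Arguments colim_in_compat {R Dm X f} dirX [j j'] x.
Arguments colim_in_ker {R Dm X f} dirX [j x].
Arguments colim_lift_in {R Dm X f} dirX [T g].
Arguments colim_lift_lin {R Dm X f} dirX [T g].

Section ColimitProperties.
Variables (R : pzRingType) (Dm : int -> bool) (X : int -> int -> lmodType R)
  (f : forall j j' n, X j n -> X j' n).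
Arguments f : clear implicits.

Lemma IsColim_of_surj_ker (C : int -> lmodType R) (c : forall j n, X j n -> C n) :
  (forall j j' : int, Dm j -> j <= j' -> Dm j') ->
  (forall j n, Dm j -> islin (c j n)) ->
  (forall j j' n x, Dm j -> Dm j' -> j <= j' -> c j' n (f j j' n x) = c j n x) ->
  (forall n y, exists j x, Dm j /\ y = c j n x) ->
  (forall j n x, Dm j -> c j n x = 0 -> exists k, j <= k /\ f j k n x = 0) ->
  IsColim Dm X f C c.
Proof.
move=> Dm_up lin_c compat_c surj ker; split=> //; split=> // T g lin_g compat_g.
have c_reflects : forall n j j' x x', Dm j -> Dm j' ->
    c j n x = c j' n x' -> g j n x = g j' n x'.
  move=> n j j' x x' dj dj' e; pose k := Num.max j j'.
  have jk : j <= k by lia.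
  have j'k : j' <= k by lia.
  have dk := Dm_up _ _ dj jk.
  pose d := f j k n x - f j' k n x'.
  have : c k n d = 0 by rewrite /d (islinB (lin_c _ _ dk)) !compat_c // e subrr.
  case/ker => // l [kl fd0]; have dl := Dm_up _ _ dk kl.
  have : g k n d = 0 by rewrite -(compat_g k l n d) // fd0 (islin0 (lin_g _ _ dl)).
  by rewrite /d (islinB (lin_g _ _ dk)) !compat_g // => /eqP; rewrite subr_eq0 => /eqP.
have rep n y : {p : {j : int & X j n} | Dm (tag p) /\ y = c (tag p) n (tagged p)}.
  by apply: cid; case: (surj n y) => j [x rep_y]; exists (existT _ j x).
pose u n y := g (tag (sval (rep n y))) n (tagged (sval (rep n y))).
have u_c : forall j n x, Dm j -> u n (c j n x) = g j n x.
  move=> j n x dj; rewrite /u; case: (rep n _) => -[j' x'] /= [dj' e].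
  by apply: c_reflects; rewrite -?e.
exists u; split; last split=> //.
  move=> n a y z; case: (surj n y) => j1 [x1 [d1 ->]]; case: (surj n z) => j2 [x2 [d2 ->]].
  pose k := Num.max j1 j2.
  have j1k : j1 <= k by lia.
  have j2k : j2 <= k by lia.
  have dk := Dm_up _ _ d1 j1k.
  rewrite -(compat_c j1 k n x1) // -(compat_c j2 k n x2) // -(lin_c _ _ dk) !u_c //.
  by rewrite (lin_g _ _ dk) !compat_g.
by move=> u' _ u'_c n y; case: (surj n y) => j [x [dj ->]]; rewrite u'_c // u_c.
Qed.

Lemma IsColim_colim
    (dirX : forall n, directed_system Dm (fun j => X j n) (fun j j' => f j j' n)) :
  IsColim Dm X f (fun n => colim (dirX n)) (fun j n => colim_in (dirX n) j).
Proof.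
apply: IsColim_of_surj_ker.
- by move=> j j' dj jj'; apply: (dir_up (dirX 0)) dj jj'.
- by move=> j n dj; apply: colim_in_lin.
- by move=> j j' n x dj _ jj'; apply: colim_in_compat.
- by move=> n y; apply: colim_in_surj.
move=> j n x dj /(colim_in_ker _ dj) [m f0].
by exists (Num.max m j); split; [lia | apply: f0; lia].
Qed.

Section TwoColimits.
Variables (C C' : int -> lmodType R) (c : forall j n, X j n -> C n)
  (c' : forall j n, X j n -> C' n).
Arguments c : clear implicits.
Arguments c' : clear implicits.
Hypotheses (colimC : IsColim Dm X f C c) (colimC' : IsColim Dm X f C' c').

Lemma IsColim_endo_id (w : forall n, C n -> C n) :
  (forall n, islin (w n)) -> (forall j n x, Dm j -> w n (c j n x) = c j n x) ->
  forall n y, w n y = y.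
Proof.
case: colimC => lin_c [compat_c univ] lin_w w_c n y.
case: (univ C c lin_c compat_c) => u [_ [_ uniq_u]].
by rewrite (uniq_u w) //; symmetry; apply: (uniq_u (fun _ y => y)).
Qed.

Lemma IsColim_factor : exists u : forall n, C n -> C' n,
  (forall n, islin (u n)) /\ (forall j n x, Dm j -> u n (c j n x) = c' j n x).
Proof.
case: colimC' => lin_c' [compat_c' _]; case: colimC => _ [_ univ].
by case: (univ C' c' lin_c' compat_c') => u [lin_u [u_c _]]; exists u.
Qed.
End TwoColimits.

Lemma IsColim_bij (C C' : int -> lmodType R) (c : forall j n, X j n -> C n)
    (c' : forall j n, X j n -> C' n) (u : forall n, C n -> C' n) :
  IsColim Dm X f C c -> IsColim Dm X f C' c' ->
  (forall n, islin (u n)) -> (forall j n x, Dm j -> u n (c j n x) = c' j n x) ->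
  forall n, bijective (u n).
Proof.
move=> colimC colimC' lin_u u_c n.
case: (IsColim_factor colimC' colimC) => v [lin_v v_c'].
exists (v n) => y.
  apply: (IsColim_endo_id colimC (w := fun n y => v n (u n y))) => // [m|j m x dj].
    exact: islin_comp.
  by rewrite u_c // v_c'.
apply: (IsColim_endo_id colimC' (w := fun n y => u n (v n y))) => // [m|j m x dj].
  exact: islin_comp.
by rewrite v_c' // u_c.
Qed.

Lemma IsColim_eq0 (C K : int -> lmodType R) (c : forall j n, X j n -> C n)
    (k : forall j n, X j n -> K n) :
  IsColim Dm X f C c -> IsColim Dm X f K k -> (forall n (y : K n), y = 0) ->
  forall n (y : C n), y = 0.
Proof.
move=> colimC colimK K0 n y.
case: (IsColim_factor colimC colimK) => u [lin_u u_c].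
case: (IsColim_bij colimC colimK lin_u u_c n) => v uK _.
by rewrite -(uK y) (K0 _ (u n y)) -(islin0 (lin_u n)) uK.
Qed.
End ColimitProperties.

Lemma ele_refl a : ele a a. Proof. by case: a => //= i. Qed.
Lemma ele_trans a b c : ele a b -> ele b c -> ele a c.
Proof. by case: a; case: b; case: c => //= *; lia. Qed.
Lemma ele_PInf a : ele a PInf. Proof. by case: a. Qed.
#[local] Hint Resolve ele_refl ele_PInf : core.

Lemma ele_Fin_up a (j j' : int) : ele a (Fin j) -> j <= j' -> ele a (Fin j').
Proof. by move=> aj jj'; apply: ele_trans aj _. Qed.

Section SystemAxioms.
Variables (R : pzRingType) (P : ext -> bool) (D : sysdata R).
Hypothesis sysD : is_system P D.

Lemma sys_eta_lin a b c d n : P a -> P b -> P c -> P d ->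
  ele a b -> ele c d -> ele a c -> ele b d -> islin (eta D a b c d n).
Proof. by case: sysD => lin_eta _ *; apply: lin_eta. Qed.

Lemma sys_del_lin a b c n : P a -> P b -> P c -> ele a b -> ele b c -> islin (del D a b c n).
Proof. by case: sysD => _ [lin_del _] *; apply: lin_del. Qed.

Lemma sys_eta_id a b n x : P a -> P b -> ele a b -> eta D a b a b n x = x.
Proof. by case: sysD => _ [_ [eta_id _]] *; apply: eta_id. Qed.

Lemma sys_eta_comp a b c d e f n x : P a -> P b -> P c -> P d -> P e -> P f ->
  ele a b -> ele c d -> ele e f -> ele a c -> ele b d -> ele c e -> ele d f ->
  eta D c d e f n (eta D a b c d n x) = eta D a b e f n x.
Proof. by case: sysD => _ [_ [_ [eta_comp _]]] *; apply: eta_comp. Qed.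

Lemma sys_del_nat a b c a' b' c' n x : P a -> P b -> P c -> P a' -> P b' -> P c' ->
  ele a b -> ele b c -> ele a' b' -> ele b' c' -> ele a a' -> ele b b' -> ele c c' ->
  eta D a b a' b' n (del D a b c n x) = del D a' b' c' n (eta D b c b' c' (n + 1) x).
Proof. by case: sysD => _ [_ [_ [_ [del_nat _]]]] *; apply: del_nat. Qed.

Section Exactness.
Variables (a b c : ext).
Hypotheses (Pa : P a) (Pb : P b) (Pc : P c) (ab : ele a b) (bc : ele b c).

Lemma sys_exact_ac n (y : H D a c n) :
  eta D a c b c n y = 0 <-> exists x : H D a b n, eta D a b a c n x = y.
Proof. by case: sysD => _ [_ [_ [_ [_ exact_abc]]]]; case: (exact_abc a b c). Qed.

Lemma sys_exact_bc n (y : H D b c (n + 1)) :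
  del D a b c n y = 0 <-> exists x : H D a c (n + 1), eta D a c b c (n + 1) x = y.
Proof. by case: sysD => _ [_ [_ [_ [_ exact_abc]]]]; case: (exact_abc a b c) => // _ []. Qed.

Lemma sys_exact_ab n (y : H D a b n) :
  eta D a b a c n y = 0 <-> exists x : H D b c (n + 1), del D a b c n x = y.
Proof. by case: sysD => _ [_ [_ [_ [_ exact_abc]]]]; case: (exact_abc a b c) => // _ []. Qed.
End Exactness.

Lemma sys_diag0 a n (y : H D a a n) : P a -> y = 0.
Proof.
move=> Pa; rewrite -(sys_eta_id y Pa Pa (ele_refl a)).
by apply/(sys_exact_ac Pa Pa Pa (ele_refl a) (ele_refl a)); exists y; rewrite sys_eta_id.
Qed.
End SystemAxioms.

Definition fin_bound (a : ext) : int := if a is Fin j then j else 0.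

Lemma ele_fin_bound a (k : int) : notPInf a -> fin_bound a <= k -> ele a (Fin k).
Proof. by case: a. Qed.

Lemma notPInfP (P : ext -> bool) a : P PInf = false -> P a -> notPInf a.
Proof. by case: a => // ->. Qed.

Lemma ele_notPInf a b : ele a b -> notPInf b -> notPInf a.
Proof. by case: a; case: b. Qed.

Lemma Fin_above3 b c e : notPInf b -> notPInf c -> notPInf e ->
  exists k : int, [/\ ele b (Fin k), ele c (Fin k) & ele e (Fin k)].
Proof.
move=> nb nc ne; exists (Num.max (fin_bound b) (Num.max (fin_bound c) (fin_bound e))).
by split; apply: ele_fin_bound => //; lia.
Qed.

Lemma tail_directed (R : pzRingType) (Q : ext -> bool) (D : sysdata R) :
  is_system Q D -> (forall j, Q (Fin j)) -> Q PInf ->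
  forall n, directed_system (fun _ => true) (fun s => H D (Fin s) PInf n)
    (fun s t => eta D (Fin s) PInf (Fin t) PInf n).
Proof.
move=> sysD Q_Fin Q_PInf n; split.
- by [].
- by exists 0.
- by move=> j j' _ jj'; apply: (sys_eta_lin sysD).
- by move=> j k l x _ jk kl; apply: (sys_eta_comp sysD) => //=; lia.
Qed.

Section ConvergentProlongation.
Variables (R : pzRingType) (P Q : ext -> bool) (D D' : sysdata R)
  (phi : forall a b n, H D a b n -> H D' a b n).
Arguments phi : clear implicits.
Hypotheses (P_Fin : forall j, P (Fin j)) (P_PInf : P PInf = false)
  (PQ : forall a, P a -> Q a) (Q_PInf : Q PInf)
  (sysD' : is_system Q D') (proD' : is_prolongation P D D' phi) (convD' : cond_conv D').

Let Q_Fin j : Q (Fin j) := PQ (P_Fin j).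
#[local] Hint Resolve P_Fin Q_Fin Q_PInf : core.

Lemma phi_lin_bij a b n : P a -> P b -> ele a b -> islin (phi a b n) /\ bijective (phi a b n).
Proof. by case: proD' => phi_iso _ *; apply: phi_iso. Qed.

Lemma phi_eta a b c d n x : P a -> P b -> P c -> P d -> ele a b -> ele c d ->
  ele a c -> ele b d -> phi c d n (eta D a b c d n x) = eta D' a b c d n (phi a b n x).
Proof. by case: proD' => _ [phi_eta _] *; apply: phi_eta. Qed.

(* Conditional convergence, read off the explicit colimit of the tail diagram. *)
Lemma tail_vanish s n (z : H D' (Fin s) PInf n) :
  exists t, s <= t /\ eta D' (Fin s) PInf (Fin t) PInf n z = 0.
Proof.
have tail := tail_directed sysD' Q_Fin Q_PInf.
have := convD' (IsColim_colim tail) (colim_in (tail n) s z).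
case/(colim_in_ker (tail n) (erefl true)) => m z0.
by exists (Num.max m s); split; [lia | apply: z0; lia].
Qed.

Lemma row_cocone_surj i n (y : H D' i PInf n) : P i ->
  exists j x, row_dom i j /\ y = row_cocone D D' phi i j n x.
Proof.
move=> Pi; have i_s : ele i (Fin (fin_bound i)).
  by apply: ele_fin_bound; [exact: notPInfP Pi|].
case: (tail_vanish (eta D' i PInf (Fin (fin_bound i)) PInf n y)) => t [st].
rewrite (sys_eta_comp sysD') //= ?PQ // => y0.
have it : ele i (Fin t) by exact: ele_Fin_up i_s st.
have [x' <-] := (sys_exact_ac sysD' (PQ Pi) (Q_Fin t) Q_PInf it (ele_PInf _) y).1 y0.
case: (phi_lin_bij n Pi (P_Fin t) it) => _ [phi' _ phiK'].
by exists t, (phi' x'); rewrite /row_cocone phiK'.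
Qed.

Lemma row_cocone_ker i j n x : P i -> row_dom i j -> row_cocone D D' phi i j n x = 0 ->
  exists k, j <= k /\ eta D i (Fin j) i (Fin k) n x = 0.
Proof.
move=> Pi ij x0; have Qi := PQ Pi.
have [w del_w] : exists w, del D' i (Fin j) PInf n w = phi i (Fin j) n x.
  exact/(sys_exact_ab sysD' Qi (Q_Fin j) Q_PInf ij (ele_PInf _)).
case: (tail_vanish w) => t [jt w0].
have [v eta_v] : exists v, eta D' (Fin j) (Fin t) (Fin j) PInf (n + 1) v = w.
  exact/(sys_exact_ac sysD' (Q_Fin j) (Q_Fin t) Q_PInf jt (ele_PInf _)).
have it : ele i (Fin t) by exact: ele_Fin_up ij jt.
exists t; split=> //.
(* phi x bounds w, and w comes from H(j,t); so phi x is already a boundary from H(j,t). *)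
have phi_x : phi i (Fin j) n x = del D' i (Fin j) (Fin t) n v.
  rewrite -del_w -eta_v -(sys_del_nat sysD' (a := i) (c := Fin t)) //.
  by rewrite (sys_eta_id sysD').
have : eta D' i (Fin j) i (Fin t) n (phi i (Fin j) n x) = 0.
  by rewrite phi_x; apply/(sys_exact_ab sysD' Qi (Q_Fin j) (Q_Fin t) ij jt); exists v.
rewrite -phi_eta //; case: (phi_lin_bij n Pi (P_Fin t) it) => lin_phi [phi' phiK _] e0.
by rewrite -[LHS]phiK e0 -(islin0 lin_phi) phiK.
Qed.

Lemma row_cocone_IsColim i : P i ->
  IsColim (row_dom i) (fun j => H D i (Fin j)) (fun j j' => eta D i (Fin j) i (Fin j'))
          (H D' i PInf) (row_cocone D D' phi i).
Proof.
move=> Pi; apply: IsColim_of_surj_ker.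
- by move=> j j' ij jj'; exact: ele_Fin_up ij jj'.
- move=> j n ij; apply: (islin_comp (g := phi i (Fin j) n)).
    by case: (phi_lin_bij n Pi (P_Fin j) ij).
  exact: (sys_eta_lin sysD' (PQ Pi) (Q_Fin j) (PQ Pi) Q_PInf ij).
- move=> j j' n x ij ij' jj'; rewrite /row_cocone phi_eta //.
  by rewrite (sys_eta_comp sysD') //; apply: PQ.
- by move=> n y; apply: row_cocone_surj.
- by move=> j n x ij; apply: row_cocone_ker.
Qed.

End ConvergentProlongation.

Section Construction.
Variables (R : pzRingType) (P : ext -> bool) (D : sysdata R).
Hypotheses (sysD : is_system P D) (P_Fin : forall j, P (Fin j)) (P_PInf : P PInf = false).
#[local] Hint Resolve P_Fin : core.
Local Unset Implicit Arguments.

(* Off P the row diagram gets zero transition maps; this makes H'(+oo, +oo) = 0. *)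
Definition row_diag_dom a (j : int) : bool := if P a then ele a (Fin j) else true.
Definition row_diag_map a n (j j' : int) (x : H D a (Fin j) n) : H D a (Fin j') n :=
  if P a then eta D a (Fin j) a (Fin j') n x else 0.

Lemma row_diag_directed a n :
  directed_system (row_diag_dom a) (fun j => H D a (Fin j) n) (row_diag_map a n).
Proof.
rewrite /row_diag_dom /row_diag_map; case Pa: (P a); split.
- by move=> j j' aj jj'; exact: ele_Fin_up aj jj'.
- by exists (fin_bound a); apply: ele_fin_bound; [exact: notPInfP Pa|].
- by move=> j j' aj jj'; apply: (sys_eta_lin sysD) => //; exact: ele_Fin_up aj jj'.
- move=> j k l x aj jk kl; have ak := ele_Fin_up aj jk.
  by apply: (sys_eta_comp sysD) => //; exact: ele_Fin_up ak kl.
- by [].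
- by exists 0.
- by move=> *; exact: islin_cst0.
- by [].
Qed.

Definition Hinf a n : lmodType R := colim (row_diag_directed a n).
Definition to_Hinf a n j : H D a (Fin j) n -> Hinf a n := colim_in (row_diag_directed a n) j.

Definition bound2 (b c : ext) : int := Num.max (fin_bound b) (fin_bound c).

Definition eta_to_inf a b c n (x : H D a b n) : Hinf c n :=
  to_Hinf c n (bound2 b c) (eta D a b c (Fin (bound2 b c)) n x).
Definition eta_inf a c n : Hinf a n -> Hinf c n :=
  colim_lift (row_diag_directed a n) (fun j x => eta_to_inf a (Fin j) c n x).
Definition del_inf a b n : Hinf b (n + 1) -> H D a b n :=
  colim_lift (row_diag_directed b (n + 1)) (fun j x => del D a b (Fin j) n x).

Definition Hext (a b : ext) (n : int) : lmodType R :=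
  if b is PInf then Hinf a n else H D a b n.

Definition eta_ext a b c d n : Hext a b n -> Hext c d n :=
  match b as b0, d as d0 return Hext a b0 n -> Hext c d0 n with
  | PInf, PInf => eta_inf a c n
  | PInf, _ => fun _ => 0
  | b', PInf => eta_to_inf a b' c n
  | b', d' => eta D a b' c d' n
  end.

Definition del_ext a b c n : Hext b c (n + 1) -> Hext a b n :=
  match b as b0, c as c0 return Hext b0 c0 (n + 1) -> Hext a b0 n with
  | PInf, _ => fun _ => 0
  | b', PInf => del_inf a b' n
  | b', c' => del D a b' c' n
  end.

Definition incl_ext a b n : H D a b n -> Hext a b n :=
  if b is PInf then fun _ => 0 else id.

Definition prolong : sysdata R := @SysData R Hext eta_ext del_ext.

Definition Pext (a : ext) : bool := P a || (if a is PInf then true else false).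
Local Set Implicit Arguments.

Lemma row_diag_domE a j : P a -> row_diag_dom a j = ele a (Fin j).
Proof. by rewrite /row_diag_dom => ->. Qed.

Lemma row_diag_mapE a n j j' x : P a -> row_diag_map a n j j' x = eta D a (Fin j) a (Fin j') n x.
Proof. by rewrite /row_diag_map => ->. Qed.

Lemma to_Hinf_lin a n j : P a -> ele a (Fin j) -> islin (to_Hinf a n j).
Proof.
move=> Pa aj; have dj : row_diag_dom a j by rewrite row_diag_domE.
exact: colim_in_lin _ dj.
Qed.

Lemma to_Hinf_eta a n j j' x : P a -> ele a (Fin j) -> j <= j' ->
  to_Hinf a n j' (eta D a (Fin j) a (Fin j') n x) = to_Hinf a n j x.
Proof.
move=> Pa aj jj'; rewrite -(row_diag_mapE j' x Pa).
by apply: (colim_in_compat _ _ _ jj'); rewrite row_diag_domE.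
Qed.

Lemma to_Hinf_surj a n (y : Hinf a n) : P a -> exists j x, ele a (Fin j) /\ y = to_Hinf a n j x.
Proof. by move=> Pa; case: (colim_in_surj y) => j [x]; rewrite row_diag_domE //; exists j, x. Qed.

Lemma to_Hinf_ker a n j x : P a -> ele a (Fin j) -> to_Hinf a n j x = 0 ->
  exists m, forall k, m <= k -> j <= k -> eta D a (Fin j) a (Fin k) n x = 0.
Proof.
move=> Pa aj; case/(colim_in_ker _); first by rewrite row_diag_domE.
by move=> m x0; exists m => k mk jk; rewrite -row_diag_mapE // x0.
Qed.

Lemma Hinf_PInf0 n (y : Hinf PInf n) : y = 0.
Proof.
case: (colim_in_surj y) => j [x [dj ->]].
have jj : j <= j + 1 by lia.
have x0 : row_diag_map PInf n j (j + 1) x = 0 by rewrite /row_diag_map P_PInf.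
rewrite -(colim_in_compat (row_diag_directed PInf n) x dj jj) x0.
have dj1 : row_diag_dom PInf (j + 1) by rewrite /row_diag_dom P_PInf.
exact: islin0 (colim_in_lin _ dj1).
Qed.

Lemma Hinf_PInf_eq n (y z : Hinf PInf n) : y = z.
Proof. by rewrite (Hinf_PInf0 y) (Hinf_PInf0 z). Qed.

Lemma ele_bound2l b c : notPInf b -> ele b (Fin (bound2 b c)).
Proof. by move=> nb; apply: ele_fin_bound => //; rewrite /bound2; lia. Qed.

Lemma ele_bound2r b c : notPInf c -> ele c (Fin (bound2 b c)).
Proof. by move=> nc; apply: ele_fin_bound => //; rewrite /bound2; lia. Qed.

Lemma eta_to_infE a b c n x (k : int) : P a -> P b -> P c -> ele a b -> ele a c ->
  ele b (Fin k) -> ele c (Fin k) -> eta_to_inf a b c n x = to_Hinf c n k (eta D a b c (Fin k) n x).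
Proof.
move=> Pa Pb Pc ab ac bk ck; rewrite /eta_to_inf.
have [nb nc] := (notPInfP P_PInf Pb, notPInfP P_PInf Pc).
pose m := Num.max (bound2 b c) k.
have lm : bound2 b c <= m by lia.
have km : k <= m by lia.
have cl := ele_bound2r b nc.
rewrite -(to_Hinf_eta _ Pc cl lm) -(to_Hinf_eta _ Pc ck km).
rewrite !(sys_eta_comp sysD) //; try exact: ele_Fin_up km; try exact: ele_Fin_up lm.
exact: ele_bound2l.
Qed.

Lemma eta_to_inf_lin a b c n : P a -> P b -> P c -> ele a b -> ele a c ->
  islin (eta_to_inf a b c n).
Proof.
move=> Pa Pb Pc ab ac; have [nb nc] := (notPInfP P_PInf Pb, notPInfP P_PInf Pc).
apply: islin_comp; last exact: to_Hinf_lin (ele_bound2r b nc).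
by apply: (sys_eta_lin sysD) => //; [exact: ele_bound2r | exact: ele_bound2l].
Qed.

Lemma eta_to_inf_compat a c n : P a -> P c -> ele a c ->
  forall (j j' : int) x, row_diag_dom a j -> j <= j' ->
  eta_to_inf a (Fin j') c n (row_diag_map a n j j' x) = eta_to_inf a (Fin j) c n x.
Proof.
move=> Pa Pc ac j j' x; rewrite row_diag_domE // row_diag_mapE // => aj jj'.
have nc := notPInfP P_PInf Pc.
have j'k := ele_bound2l (b := Fin j') c isT; have ck := ele_bound2r (Fin j') nc.
have jk : ele (Fin j) (Fin (bound2 (Fin j') c)) := ele_trans (jj' : ele (Fin j) (Fin j')) j'k.
have aj' := ele_Fin_up aj jj'.
rewrite (eta_to_infE _ _ _ _ _ _ j'k ck) // (eta_to_infE x Pa (P_Fin j) Pc aj ac jk ck).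
by rewrite (sys_eta_comp sysD).
Qed.

Lemma eta_inf_to_Hinf a c n j x : P a -> P c -> ele a c -> ele a (Fin j) ->
  eta_inf a c n (to_Hinf a n j x) = eta_to_inf a (Fin j) c n x.
Proof.
move=> Pa Pc ac aj; rewrite /eta_inf /to_Hinf.
by rewrite (colim_lift_in _ (eta_to_inf_compat Pa Pc ac)) // row_diag_domE.
Qed.

Lemma eta_inf_lin a c n : P a -> P c -> ele a c -> islin (eta_inf a c n).
Proof.
move=> Pa Pc ac; apply: (colim_lift_lin _ (eta_to_inf_compat Pa Pc ac)) => j.
by rewrite row_diag_domE // => aj; apply: eta_to_inf_lin.
Qed.

Lemma del_inf_compat a b n : P a -> P b -> ele a b ->
  forall (j j' : int) x, row_diag_dom b j -> j <= j' ->
  del D a b (Fin j') n (row_diag_map b (n + 1) j j' x) = del D a b (Fin j) n x.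
Proof.
move=> Pa Pb ab j j' x; rewrite row_diag_domE // row_diag_mapE // => bj jj'.
rewrite -(sys_del_nat sysD (a := a) (b := b) (c := Fin j)) //; last exact: ele_Fin_up bj jj'.
by rewrite (sys_eta_id sysD).
Qed.

Lemma del_inf_to_Hinf a b n j x : P a -> P b -> ele a b -> ele b (Fin j) ->
  del_inf a b n (to_Hinf b (n + 1) j x) = del D a b (Fin j) n x.
Proof.
move=> Pa Pb ab bj; rewrite /del_inf /to_Hinf.
by rewrite (colim_lift_in _ (del_inf_compat Pa Pb ab)) // row_diag_domE.
Qed.

Lemma del_inf_lin a b n : P a -> P b -> ele a b -> islin (del_inf a b n).
Proof.
move=> Pa Pb ab; apply: (colim_lift_lin _ (del_inf_compat Pa Pb ab)) => j.
by rewrite row_diag_domE // => bj; apply: (sys_del_lin sysD).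
Qed.

Lemma P_Pext a : P a -> Pext a. Proof. by rewrite /Pext => ->. Qed.
Lemma Pext_PInf : Pext PInf. Proof. by rewrite /Pext orbT. Qed.
Lemma Pext_P a : Pext a -> notPInf a -> P a.
Proof. by rewrite /Pext; case: a => [|j|] /=; rewrite ?orbF ?orbT. Qed.
#[local] Hint Resolve Pext_PInf : core.

Ltac in_P :=
  match goal with
  | |- is_true (P (Fin _)) => exact: P_Fin
  | Hx : is_true (Pext ?x) |- is_true (P ?x) => exact: Pext_P Hx isT
  | Hx : is_true (Pext ?x), Nx : is_true (notPInf ?x) |- is_true (P ?x) => exact: Pext_P Hx Nx
  | Hx : is_true (Pext ?x), E : is_true (ele ?x ?y) |- is_true (P ?x) =>
      exact: Pext_P Hx (ele_notPInf E isT)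
  | Hx : is_true (Pext ?x), E : is_true (ele ?x ?y), Ny : is_true (notPInf ?y) |- is_true (P ?x) =>
      exact: Pext_P Hx (ele_notPInf E Ny)
  end.

Lemma islin_to_Hinf_PInf (U : lmodType R) n (g : U -> Hinf PInf n) : islin g.
Proof. by move=> *; apply: Hinf_PInf_eq. Qed.

Lemma prolong_eta_lin a b c d n : Pext a -> Pext b -> Pext c -> Pext d ->
  ele a b -> ele c d -> ele a c -> ele b d -> islin (eta_ext a b c d n).
Proof.
move=> Qa Qb Qc Qd ab cd ac bd.
case: b Qb ab bd => [|j|] Qb ab bd; case: d Qd cd bd => [|k|] Qd cd bd //=.
all: try by apply: (sys_eta_lin sysD); try in_P.
all: case: c Qc cd ac => [|m|] Qc cd ac; try exact: islin_to_Hinf_PInf.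
all: first [ by apply: eta_to_inf_lin; try in_P | by apply: eta_inf_lin; try in_P ].
Qed.

Lemma prolong_del_lin a b c n : Pext a -> Pext b -> Pext c ->
  ele a b -> ele b c -> islin (del_ext a b c n).
Proof.
move=> Qa Qb Qc ab bc.
case: c Qc bc => [|k|] Qc bc; case: b Qb ab bc => [|j|] Qb ab bc //=.
all: try exact: islin_cst0.
all: first [ by apply: (sys_del_lin sysD); try in_P | by apply: del_inf_lin; try in_P ].
Qed.

Lemma prolong_eta_id a b n x : Pext a -> Pext b -> ele a b -> eta_ext a b a b n x = x.
Proof.
move=> Qa Qb ab; case: b Qb ab x => [|j|] Qb ab x /=; try by apply: (sys_eta_id sysD); try in_P.
case: a Qa ab x => [|i|] Qa _ x; last exact: Hinf_PInf_eq.
all: have Pa : P _ := Pext_P Qa isT.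
all: case: (to_Hinf_surj x Pa) => j [z [aj ->]].
all: by rewrite eta_inf_to_Hinf // (eta_to_infE _ _ _ _ _ _ (ele_refl _) aj) ?(sys_eta_id sysD).
Qed.

Lemma eta_to_inf_eta a b c d e n x : P a -> P b -> P c -> P d -> P e ->
  ele a b -> ele c d -> ele a c -> ele b d -> ele c e ->
  eta_to_inf c d e n (eta D a b c d n x) = eta_to_inf a b e n x.
Proof.
move=> Pa Pb Pc Pd Pe ab cd ac bd ce.
have [k [bk dk ek]] := Fin_above3 (notPInfP P_PInf Pb) (notPInfP P_PInf Pd) (notPInfP P_PInf Pe).
have ae := ele_trans ac ce.
rewrite (eta_to_infE _ _ _ _ _ _ dk ek) // (eta_to_infE _ _ _ _ _ _ bk ek) //.
by rewrite (sys_eta_comp sysD) //; exact: ele_trans ce ek.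
Qed.

Lemma eta_inf_eta_to_inf a b c e n x : P a -> P b -> P c -> P e ->
  ele a b -> ele a c -> ele c e -> eta_inf c e n (eta_to_inf a b c n x) = eta_to_inf a b e n x.
Proof.
move=> Pa Pb Pc Pe ab ac ce.
have [k [bk ck ek]] := Fin_above3 (notPInfP P_PInf Pb) (notPInfP P_PInf Pc) (notPInfP P_PInf Pe).
have ae := ele_trans ac ce.
rewrite (eta_to_infE _ _ _ _ _ _ bk ck) // eta_inf_to_Hinf //.
rewrite (eta_to_infE _ _ _ _ _ _ (ele_refl _) ek) // (eta_to_infE _ _ _ _ _ _ bk ek) //.
by rewrite (sys_eta_comp sysD).
Qed.

Lemma eta_inf_comp a c e n y : P a -> P c -> P e -> ele a c -> ele c e ->
  eta_inf c e n (eta_inf a c n y) = eta_inf a e n y.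
Proof.
move=> Pa Pc Pe ac ce; case: (to_Hinf_surj y Pa) => j [z [aj ->]].
have ae := ele_trans ac ce.
rewrite [eta_inf a c n _]eta_inf_to_Hinf // [eta_inf a e n _]eta_inf_to_Hinf //.
exact: eta_inf_eta_to_inf.
Qed.

Lemma prolong_eta_comp a b c d e f n x : Pext a -> Pext b -> Pext c -> Pext d -> Pext e -> Pext f ->
  ele a b -> ele c d -> ele e f -> ele a c -> ele b d -> ele c e -> ele d f ->
  eta_ext c d e f n (eta_ext a b c d n x) = eta_ext a b e f n x.
Proof.
move=> Qa Qb Qc Qd Qe Qf ab cd ef ac bd ce df.
case: b Qb ab bd x => [|j|] Qb ab bd x; case: d Qd cd bd df => [|k|] Qd cd bd df;
  case: f Qf ef df => [|l|] Qf ef df //=.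
all: try by apply: (sys_eta_comp sysD); try in_P.
all: case: e Qe ef ce => [|m|] Qe ef ce; try exact: Hinf_PInf_eq.
all: have nc : notPInf c := ele_notPInf ce isT.
all: have na : notPInf a := ele_notPInf ac nc.
all: first [ by apply: eta_to_inf_eta; try in_P
           | by apply: eta_inf_eta_to_inf; try in_P
           | by apply: eta_inf_comp; try in_P ].
Qed.

Lemma del_nat_inf a b c a' b' n x : P a -> P b -> P c -> P a' -> P b' ->
  ele a b -> ele b c -> ele a' b' -> ele a a' -> ele b b' ->
  eta D a b a' b' n (del D a b c n x) = del_inf a' b' n (eta_to_inf b c b' (n + 1) x).
Proof.
move=> Pa Pb Pc Pa' Pb' ab bc a'b' aa' bb'.
have nb' := notPInfP P_PInf Pb'.
have [k [ck b'k _]] := Fin_above3 (notPInfP P_PInf Pc) nb' nb'.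
rewrite (eta_to_infE _ _ _ _ _ _ ck b'k) // del_inf_to_Hinf //.
by apply: (sys_del_nat sysD) => //; exact: ele_trans bc ck.
Qed.

(* The composite factors through some H(k, k) = 0. *)
Lemma eta_to_inf_del a b c a' n x : P a -> P b -> P c -> P a' ->
  ele a b -> ele b c -> ele a a' -> eta_to_inf a b a' n (del D a b c n x) = 0.
Proof.
move=> Pa Pb Pc Pa' ab bc aa'.
have [k [ck a'k bk]] := Fin_above3 (notPInfP P_PInf Pc) (notPInfP P_PInf Pa') (notPInfP P_PInf Pb).
rewrite (eta_to_infE _ _ _ _ _ _ bk a'k) // (sys_del_nat sysD (c' := Fin k)) //.
rewrite (sys_diag0 sysD (eta D b c (Fin k) (Fin k) (n + 1) x)) //.
rewrite (islin0 (sys_del_lin sysD Pa' (P_Fin k) (P_Fin k) a'k (ele_refl _))).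
exact: islin0 (to_Hinf_lin (n := n) Pa' a'k).
Qed.

Lemma prolong_del_nat a b c a' b' c' n x : Pext a -> Pext b -> Pext c ->
  Pext a' -> Pext b' -> Pext c' ->
  ele a b -> ele b c -> ele a' b' -> ele b' c' -> ele a a' -> ele b b' -> ele c c' ->
  eta_ext a b a' b' n (del_ext a b c n x) = del_ext a' b' c' n (eta_ext b c b' c' (n + 1) x).
Proof.
move=> Qa Qb Qc Qa' Qb' Qc' ab bc a'b' b'c' aa' bb' cc'.
case: c Qc bc cc' x => [|k|] Qc bc cc' x; case: b Qb ab bc bb' x => [|j|] Qb ab bc bb' x;
  case: c' Qc' b'c' cc' => [|k'|] Qc' b'c' cc';
  case: b' Qb' a'b' bb' b'c' => [|j'|] Qb' a'b' bb' b'c' //=.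
all: try by apply: (sys_del_nat sysD); try in_P.
all: try by apply: del_nat_inf; try in_P.
all: case: a' Qa' a'b' aa' => [|m|] Qa' //= a'b' aa'; try exact: Hinf_PInf_eq.
all: have na : notPInf a := ele_notPInf aa' isT.
all: try by apply: eta_to_inf_del; try in_P.
all: try by apply: islin0; apply: eta_inf_lin; try in_P.
all: have Pb : P _ := Pext_P Qb isT.
all: case: (to_Hinf_surj x Pb) => i [w [bi ->]]; rewrite del_inf_to_Hinf //; try in_P.
all: try by apply: eta_to_inf_del; try in_P.
all: by rewrite eta_inf_to_Hinf //; try in_P; apply: del_nat_inf; try in_P.
Qed.

Section InfiniteExactness.
Variables (a b : ext).
Hypotheses (Pa : P a) (Pb : P b) (ab : ele a b).

Let bk : ele b (Fin (fin_bound b)) := ele_fin_bound (notPInfP P_PInf Pb) (lexx _).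

Lemma eta_to_inf_diag0 n (x : H D a b n) : eta_to_inf a b b n x = 0.
Proof.
rewrite (eta_to_infE _ _ _ _ _ _ bk bk) // -(sys_eta_comp sysD (c := b) (d := b)) //.
rewrite (sys_diag0 sysD (eta D a b b b n x) Pb).
rewrite (islin0 (sys_eta_lin sysD (n := n) Pb Pb Pb (P_Fin _) (ele_refl b) bk (ele_refl b) bk)).
exact: islin0 (to_Hinf_lin (n := n) Pb bk).
Qed.

Lemma Hinf_exact_ac n (y : Hinf a n) :
  eta_inf a b n y = 0 <-> exists x : H D a b n, eta_to_inf a b a n x = y.
Proof.
split; last by case=> x <-; rewrite eta_inf_eta_to_inf // eta_to_inf_diag0.
case: (to_Hinf_surj y Pa) => j [z [aj ->]].
pose j' := Num.max j (fin_bound b).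
have jj' : j <= j' by lia.
have bj' : ele b (Fin j') by apply: ele_fin_bound (notPInfP P_PInf Pb) _; lia.
have aj' := ele_Fin_up aj jj'.
rewrite -(to_Hinf_eta _ Pa aj jj'); set z' := eta D a (Fin j) a (Fin j') n z.
rewrite eta_inf_to_Hinf // (eta_to_infE _ _ _ _ _ _ (ele_refl _) bj') //.
case/(to_Hinf_ker Pb bj') => m vanish.
pose k := Num.max m j'.
have j'k : j' <= k by lia.
have ak := ele_Fin_up aj' j'k; have bk' := ele_Fin_up bj' j'k.
have := vanish k ltac:(lia) j'k.
rewrite (sys_eta_comp sysD) // -(sys_eta_comp sysD (c := a) (d := Fin k)) //.
case/(sys_exact_ac sysD Pa Pb (P_Fin k) ab bk') => x eta_x.
exists x; rewrite -(to_Hinf_eta _ Pa aj' j'k) -eta_x.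
by rewrite (eta_to_infE _ _ _ _ _ _ bk' ak).
Qed.

Lemma Hinf_exact_bc n (y : Hinf b (n + 1)) :
  del_inf a b n y = 0 <-> exists x : Hinf a (n + 1), eta_inf a b (n + 1) x = y.
Proof.
split.
- case: (to_Hinf_surj y Pb) => j [w [bj ->]].
  rewrite del_inf_to_Hinf // => /(sys_exact_bc sysD Pa Pb (P_Fin j) ab bj) [z eta_z].
  have aj := ele_trans ab bj.
  exists (to_Hinf a (n + 1) j z).
  by rewrite eta_inf_to_Hinf // (eta_to_infE _ _ _ _ _ _ (ele_refl _) bj) // eta_z.
- case=> x <-; case: (to_Hinf_surj x Pa) => j [z [aj ->]].
  have nb := notPInfP P_PInf Pb.
  have [k [jk bk' _]] := Fin_above3 (isT : notPInf (Fin j)) nb nb.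
  have ak := ele_trans aj jk.
  rewrite eta_inf_to_Hinf // (eta_to_infE _ _ _ _ _ _ jk bk') // del_inf_to_Hinf //.
  rewrite -(sys_eta_comp sysD (c := a) (d := Fin k)) //.
  by apply/(sys_exact_bc sysD Pa Pb (P_Fin k) ab bk'); eexists.
Qed.

Lemma Hinf_exact_ab n (y : H D a b n) :
  eta_to_inf a b a n y = 0 <-> exists x : Hinf b (n + 1), del_inf a b n x = y.
Proof.
split.
- have ak0 := ele_trans ab bk.
  rewrite (eta_to_infE _ _ _ _ _ _ bk ak0) //.
  case/(to_Hinf_ker Pa ak0) => m vanish.
  pose k := Num.max m (fin_bound b).
  have k0k : fin_bound b <= k by lia.
  have bk' := ele_Fin_up bk k0k; have ak := ele_Fin_up ak0 k0k.
  have := vanish k ltac:(lia) k0k; rewrite (sys_eta_comp sysD) //.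
  case/(sys_exact_ab sysD Pa Pb (P_Fin k) ab bk') => w del_w.
  by exists (to_Hinf b (n + 1) k w); rewrite del_inf_to_Hinf.
- case=> x <-; case: (to_Hinf_surj x Pb) => j [w [bj ->]].
  have aj := ele_trans ab bj.
  rewrite del_inf_to_Hinf // (eta_to_infE _ _ _ _ _ _ bj aj) //.
  have -> : eta D a b a (Fin j) n (del D a b (Fin j) n w) = 0.
    by apply/(sys_exact_ab sysD Pa Pb (P_Fin j) ab bj); exists w.
  exact: islin0 (to_Hinf_lin (n := n) Pa aj).
Qed.
End InfiniteExactness.

Lemma prolong_exact a b c : Pext a -> Pext b -> Pext c -> ele a b -> ele b c ->
  (forall n (y : Hext a c n),
     eta_ext a c b c n y = 0 <-> exists x : Hext a b n, eta_ext a b a c n x = y) /\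
  (forall n (y : Hext b c (n + 1)),
     del_ext a b c n y = 0 <-> exists x : Hext a c (n + 1), eta_ext a c b c (n + 1) x = y) /\
  (forall n (y : Hext a b n),
     eta_ext a b a c n y = 0 <-> exists x : Hext b c (n + 1), del_ext a b c n x = y).
Proof.
move=> Qa Qb Qc ab bc.
case: c Qc bc => [|k|] Qc bc; case: b Qb ab bc => [|j|] Qb ab bc //=.
1-5: have Pa : P a by in_P.
1-3: by split; [|split] => n y;
  [apply: (sys_exact_ac sysD) | apply: (sys_exact_bc sysD) | apply: (sys_exact_ab sysD)]; try in_P.
1-2: by split; [|split] => n y;
  [apply: Hinf_exact_ac | apply: Hinf_exact_bc | apply: Hinf_exact_ab]; try in_P.
split; [|split] => n y.
- by split=> _; [exists y; exact: (prolong_eta_id _ Qa Qb ab) | exact: Hinf_PInf_eq].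
- by split=> _ //; exists (0 : Hinf a (n + 1)); exact: Hinf_PInf_eq.
- have -> : eta_inf a a n y = y := prolong_eta_id (y : Hext a PInf n) Qa Qb ab.
  by split=> [->|[x <-]] //; exists (0 : Hinf PInf (n + 1)).
Qed.

Lemma prolong_system : is_system Pext prolong.
Proof.
split; first by move=> *; apply: prolong_eta_lin.
split; first by move=> *; apply: prolong_del_lin.
split; first by move=> *; apply: prolong_eta_id.
split; first by move=> *; apply: prolong_eta_comp.
split; first by move=> *; apply: prolong_del_nat.
by move=> *; apply: prolong_exact.
Qed.

Lemma prolong_prolongation : is_prolongation P D prolong incl_ext.
Proof.
split; last split.
- move=> a b n Pa Pb ab.
  case: b Pb ab => [|j|] Pb ab; last by rewrite P_PInf in Pb.
    by split; [exact: islin_id | exists id].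
  by split; [exact: islin_id | exists id].
- move=> a b c d n x Pa Pb Pc Pd ab cd ac bd.
  by case: b Pb ab bd x => [|j|] Pb ab bd x; case: d Pd cd bd => [|k|] Pd cd bd //=;
    rewrite P_PInf in Pd.
- move=> a b c n x Pa Pb Pc ab bc.
  by case: b Pb ab bc x => [|j|] Pb ab bc x; case: c Pc bc x => [|k|] Pc bc x //=;
    rewrite P_PInf in Pc.
Qed.

Lemma prolong_cond_conv : cond_conv prolong.
Proof.
have Pext_Fin j : Pext (Fin j) := P_Pext (P_Fin j).
have tailK := tail_directed prolong_system Pext_Fin Pext_PInf.
move=> C c colimC; apply: (IsColim_eq0 colimC (IsColim_colim tailK)) => n y.
case: (colim_in_surj y) => s [x [_ ->]].
case: (to_Hinf_surj x (P_Fin s)) => j [z [sj ->]].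
rewrite -(colim_in_compat (tailK n) _ (erefl true) (sj : s <= j)) /=.
rewrite eta_inf_to_Hinf // eta_to_inf_diag0 //.
exact: islin0 (colim_in_lin (tailK n) (erefl true)).
Qed.
End Construction.
Arguments prolong_cond_conv {R P D} sysD P_Fin P_PInf.
Arguments prolong {R P D} sysD P_Fin P_PInf.
Arguments incl_ext {R P D} sysD P_Fin P_PInf a b n.

Lemma prolongation_statementP (R : pzRingType) (P Q : ext -> bool) (D : sysdata R) :
  is_system P D -> (forall j, P (Fin j)) -> P PInf = false -> Pext P =1 Q ->
  prolongation_statement P Q D.
Proof.
move=> sysD P_Fin P_PInf /funext <-.
have row_colim := row_cocone_IsColim P_Fin P_PInf (@P_Pext P) (Pext_PInf P).
split=> [|D' phi sysD' proD' convD' i Pi C c colimC u lin_u u_c].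
  have sysD' := prolong_system sysD P_Fin P_PInf.
  have proD' := prolong_prolongation sysD P_Fin P_PInf.
  have convD' := prolong_cond_conv sysD P_Fin P_PInf.
  exists (prolong sysD P_Fin P_PInf), (incl_ext sysD P_Fin P_PInf).
  by split; [|split; [|split]] => //; exact: row_colim sysD' proD' convD'.
exact: IsColim_bij colimC (row_colim _ _ _ _ sysD' proD' convD' i Pi) lin_u u_c.
Qed.

Theorem lemma6p5 (R : pzRingType) :
  (forall D : sysdata R, CE_system D ->
     prolongation_statement isFin notNInf D) /\
  (forall D : sysdata R, left_CE_system D ->
     prolongation_statement notPInf allExt D).
Proof.
by split=> D sysD; apply: prolongation_statementP => // -[].
Qed.
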